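(* Let a graph grammar (a finite set of substitutions $Sub_i=(\Gamma_i,\Gamma_i',V_{i,0},\varphi_i)$, $i=1,\dots,r$) be local, locally bounded and respect connectivity, and let $n$ be sufficiently large, with $G(0)\in GC_n$. Then the grammar is metrically bounded from above: there exists a constant $C=C(n)>0$ such that for each spin graph $\alpha=(G,s)$ (with $G\in GC_n$), each pair of vertices $x,y\in V(G)$ and each transformation $T=T(Sub_i,\psi)$ applicable to $\alpha$, $$d_{TG}(x,y)\le d_G(x,y)+C,$$ where $TG$ denotes the graph of $T\alpha$.
   Context: Graphs are non-directed, connected, with at most one edge between any two vertices and every vertex of finite degree. $GF_n$ (resp. $GC_n$) is the set of finite (resp. countable) such graphs in which every vertex has degree at most $n$. $d_G(x,y)$ is the graph distance (minimal number of edges of a path from $x$ to $y$) in $G$. A spin graph is a pair $\alpha=(G,s)$ with $s:V(G)\to S$ for a fixed alphabet $S$. A substitution rule $Sub=(\Gamma,\Gamma',V_0,\varphi)$ consists of two finite spin graphs $\Gamma,\Gamma'$, a subset $V_0\subset V(\Gamma)$ and a map $\varphi:V_0\to V(\Gamma')$ ($V_0$ and $\Gamma'$ may be empty). Given an isomorphism of spin graphs $\psi:\Gamma\to\Gamma_1$ onto a spin subgraph $\Gamma_1$ of $\alpha$, the transformation $T(Sub,\psi)\alpha$ is obtained by: taking the disjoint union of $\alpha$ and $\Gamma'$, deleting all links of $\Gamma_1$, deleting all vertices of $\psi(V(\Gamma))\setminus\psi(V_0)$ together with their incident links, and identifying each $\psi(v)$, $v\in V_0$, with $\varphi(v)\in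 V(\Gamma')$; spins outside $\Gamma_1$ are inherited from $\alpha$ and on $V(\Gamma')$ from $\Gamma'$. A graph grammar is a finite set of substitutions; it is local if every $\Gamma_i$ is connected; it is locally bounded if, for all sufficiently large $n$, the sets $GF_n$ and $GC_n$ are invariant under all its substitutions; it respects connectivity if $T(Sub_i,\psi)\alpha$ is connected whenever $\alpha$ is connected, for all possible $i,\psi$. *)

From HB Require Import structures.
From mathcomp Require Import all_boot.

Set Implicit Arguments.
Unset Strict Implicit.
Unset Printing Implicit Defensive.

Record spin_graph (S : Type) := SpinGraph {
  sg_V : countType;
  sg_adj : sg_V -> sg_V -> Prop;
  sg_spin : sg_V -> S }.

Record fspin_graph (S : Type) := FSpinGraph {
  fg_V : finType;
  fg_adj : rel fg_V;
  fg_spin : fg_V -> S }.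

Arguments sg_adj {S} s _ _.
Arguments sg_spin {S} s _.
Arguments fg_adj {S} f _ _.
Arguments fg_spin {S} f _.

Inductive walk {S} (G : spin_graph S) : nat -> sg_V G -> sg_V G -> Prop :=
| walk0 x : @walk S G 0 x x
| walkS k x y z : sg_adj G x y -> @walk S G k y z -> @walk S G k.+1 x z.
Arguments walk {S} G _ _ _.

Definition is_dist {S} (G : spin_graph S) (x y : sg_V G) (d : nat) : Prop :=
  walk G d x y /\ forall k, walk G k x y -> d <= k.

Definition connected {S} (G : spin_graph S) : Prop :=
  forall x y : sg_V G, exists k, walk G k x y.

Definition simple {S} (G : spin_graph S) : Prop :=
  (forall x y, sg_adj G x y -> sg_adj G y x) /\ (forall x, ~ sg_adj G x x).

Definition locally_finite {S} (G : spin_graph S) : Prop :=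
  forall x, exists l : seq (sg_V G), forall y, sg_adj G x y -> y \in l.

Definition deg_le {S} (G : spin_graph S) (n : nat) : Prop :=
  forall x, exists l : seq (sg_V G), size l <= n /\
    forall y, sg_adj G x y -> y \in l.

Definition finite_vertices {S} (G : spin_graph S) : Prop :=
  exists l : seq (sg_V G), forall x, x \in l.

Definition is_graph {S} (G : spin_graph S) : Prop :=
  simple G /\ connected G /\ locally_finite G.

Definition GC {S} (n : nat) (G : spin_graph S) : Prop := is_graph G /\ deg_le G n.
Definition GF {S} (n : nat) (G : spin_graph S) : Prop := GC n G /\ finite_vertices G.

Inductive fwalk {S} (G : fspin_graph S) : nat -> fg_V G -> fg_V G -> Prop :=
| fwalk0 x : @fwalk S G 0 x x
| fwalkS k x y z : fg_adj G x y -> @fwalk S G k y z -> @fwalk S G k.+1 x z.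
Arguments fwalk {S} G _ _ _.

Definition fsimple {S} (G : fspin_graph S) : Prop :=
  symmetric (fg_adj G) /\ irreflexive (fg_adj G).

Definition fconnected {S} (G : fspin_graph S) : Prop :=
  forall x y : fg_V G, exists k, fwalk G k x y.

Record subst (S : Type) := Subst {
  sub_G : fspin_graph S;
  sub_G' : fspin_graph S;
  sub_V0 : {set fg_V sub_G};
  sub_phi : {v : fg_V sub_G | v \in sub_V0} -> fg_V sub_G' }.

Arguments sub_G {S} s.
Arguments sub_G' {S} s.
Arguments sub_V0 {S} s.
Arguments sub_phi {S} s _.

Definition subst_wf {S} (sb : subst S) : Prop :=
  fsimple (sub_G sb) /\ fsimple (sub_G' sb).

(* psi : Gamma -> alpha is an isomorphism of spin graphs onto a spin
   subgraph Gamma_1 of alpha (Gamma_1 := image of psi). *)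
Definition embedding {S} (sb : subst S) (al : spin_graph S)
    (psi : fg_V (sub_G sb) -> sg_V al) : Prop :=
  injective psi /\
  (forall v, sg_spin al (psi v) = fg_spin (sub_G sb) v) /\
  (forall u v, fg_adj (sub_G sb) u v -> sg_adj al (psi u) (psi v)).

Section Transformation.
Context {S : Type} (sb : subst S) (al : spin_graph S)
        (psi : fg_V (sub_G sb) -> sg_V al).

(* vertices of T alpha: the vertices of alpha not in psi(V(Gamma)),
   disjoint union with V(Gamma'); psi(v), v in V0, is identified with phi(v) *)
Definition Tvert : countType :=
  ({x : sg_V al | x \notin codom psi} + fg_V (sub_G' sb))%type.

(* the vertex of T alpha corresponding to a vertex x of alpha
   (None if x is deleted) *)
Definition Tproj (x : sg_V al) : option Tvert :=
  match (insub x : option {x : sg_V al | x \notin codom psi}) with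
  | Some x' => Some (inl x')
  | None =>
      match [pick v | psi v == x] with
      | Some v =>
          omap (fun w => inr (sub_phi sb w))
               (insub v : option {v : fg_V (sub_G sb) | v \in sub_V0 sb})
      | None => None
      end
  end.

Definition link (x y : sg_V al) : Prop :=
  exists u v, psi u = x /\ psi v = y /\ fg_adj (sub_G sb) u v.

Definition Tadj (a b : Tvert) : Prop :=
  a != b /\
  ((exists x y, Tproj x = Some a /\ Tproj y = Some b /\
                sg_adj al x y /\ ~ link x y)
   \/ (exists u u', a = inr u /\ b = inr u' /\ fg_adj (sub_G' sb) u u')).

Definition Tspin (a : Tvert) : S :=
  match a with
  | inl x => sg_spin al (val x)
  | inr u => fg_spin (sub_G' sb) u
  end.

Definition Tgraph : spin_graph S := SpinGraph Tadj Tspin.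

End Transformation.

Arguments is_dist {S} G x y d.
Arguments Tproj {S} sb al psi x.
Arguments Tgraph {S} sb al psi.
Arguments embedding {S} sb al psi.

(* Respecting connectivity forces two facts on every rule.  First V0 = V(Gamma):
   attach two pendant leaves to each vertex of Gamma and apply the rule to the
   identity embedding; a vertex outside V0 is deleted and leaves its leaves
   isolated.  Second, Gamma' is connected: applied to Gamma itself the rule
   produces exactly Gamma'.  Hence the projection x |-> Tx of alpha into T alpha
   sends every edge either to an edge or to a pair of vertices of Gamma', whose
   diameter in T alpha is bounded by a constant K over all rules.  A geodesic of
   alpha from x to y is thus mapped to a walk, shortcut through Gamma' between
   its first and last visits, of length at most d_G(x,y) + K. *)

From HB Require Import structures.
From mathcomp Require Import all_boot.
From mathcomp Require Import zify.

Set Implicit Arguments.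
Unset Strict Implicit.
Unset Printing Implicit Defensive.

Lemma exists_uniform_bound (T : finType) (P : T -> nat -> Prop) :
  (forall t, exists k, P t k) -> exists K, forall t, exists2 k, k <= K & P t k.
Proof.
move=> HP.
suff [K HK] : exists K, forall t, t \in enum T -> exists2 k, k <= K & P t k.
  by exists K => t; apply: HK; rewrite mem_enum.
elim: (enum T) => [|t s [K HK]]; first by exists 0.
have [k Hk] := HP t.
exists (maxn k K) => t'; rewrite inE => /predU1P [-> | /HK [k' Hk' Pk']].
  by exists k; rewrite ?leq_maxl.
by exists k'; rewrite // (leq_trans Hk' (leq_maxr _ _)).
Qed.

Section Walks.
Variables (S : Type) (G : spin_graph S).

Lemma walk_cat k l x y z : walk G k x y -> walk G l y z -> walk G (k + l) x z.
Proof.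
elim=> {k x y} [//|k x x1 y Hxx1 _ IH] Hl.
by rewrite addSn; apply: walkS Hxx1 (IH Hl).
Qed.

Lemma walk_from_isolated k p q :
  (forall q', ~ sg_adj G p q') -> walk G k p q -> q = p.
Proof. by move=> Hiso Hw; case: Hw Hiso => // {}k {}p y {}q Hpy _ /(_ y). Qed.

End Walks.

Section WalkTransfer.
Variables (S S' : Type) (A : spin_graph S) (B : spin_graph S').
Variables (R : sg_V A -> sg_V B -> Prop) (W : sg_V B -> Prop).
Hypothesis R_total : forall x, exists a, R x a.
Hypothesis R_functional : forall x a b, R x a -> R x b -> a = b.
Hypothesis R_adj : forall x y a b,
  sg_adj A x y -> R x a -> R y b -> sg_adj B a b \/ (W a /\ W b).

Lemma walk_transfer_split k x y a b : walk A k x y -> R x a -> R y b ->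
  (exists2 m, m <= k & walk B m a b) \/
  exists w1 w2 k1 k2,
    [/\ W w1, W w2, k1 + k2 <= k, walk B k1 a w1 & walk B k2 w2 b].
Proof.
move=> Hw; elim: Hw a b => {k x y} [x | k x x1 y Hxx1 _ IH] a b Ha Hb.
  by left; exists 0; rewrite // (R_functional Ha Hb); apply: walk0.
have [a1 Ha1] := R_total x1.
have [Hab1 | [Wa Wa1]] := R_adj Hxx1 Ha Ha1.
  case: (IH _ _ Ha1 Hb) => [[m Hm Hw] | [w1 [w2 [k1 [k2 [W1 W2 Hk Hw1 Hw2]]]]]].
    by left; exists m.+1 => //; apply: walkS Hab1 Hw.
  by right; exists w1, w2, k1.+1, k2; split=> //; apply: walkS Hab1 Hw1.
right; case: (IH _ _ Ha1 Hb) => [[m Hm Hw] | [w1 [w2 [k1 [k2 [W1 W2 Hk Hw1 Hw2]]]]]].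
  by exists a, a1, 0, m; split=> //; [apply: leqW | apply: walk0].
exists a, w2, 0, k2; split=> //; last exact: walk0.
by apply: leqW; apply: leq_trans Hk; apply: leq_addl.
Qed.

Variable K : nat.
Hypothesis W_diam : forall w1 w2, W w1 -> W w2 -> exists2 m, m <= K & walk B m w1 w2.

Lemma walk_transfer k x y a b : walk A k x y -> R x a -> R y b ->
  exists2 m, m <= k + K & walk B m a b.
Proof.
move=> Hw Ha Hb.
case: (walk_transfer_split Hw Ha Hb) => [[m Hm Hmw] | [w1 [w2 [k1 [k2 [W1 W2 Hk Hw1 Hw2]]]]]].
  by exists m; rewrite ?(leq_trans Hm (leq_addr _ _)).
have [m Hm Hmw] := W_diam W1 W2.
exists (k1 + (m + k2)); first lia.
exact: walk_cat Hw1 (walk_cat Hmw Hw2).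
Qed.

End WalkTransfer.

Definition fdiam_le S (G : fspin_graph S) (K : nat) : Prop :=
  forall u w, exists2 m, m <= K & fwalk G m u w.

Lemma fconnected_fdiam_le S (G : fspin_graph S) :
  fconnected G -> exists K, fdiam_le G K.
Proof.
move=> Gc.
have [K HK] := @exists_uniform_bound (fg_V G * fg_V G)%type
  (fun p k => fwalk G k p.1 p.2) (fun p => Gc p.1 p.2).
by exists K => u w; apply: (HK (u, w)).
Qed.

Section Transformation.
Variables (S : Type) (sb : subst S) (al : spin_graph S)
          (psi : fg_V (sub_G sb) -> sg_V al).
Local Notation T := (Tgraph sb al psi).

Lemma Tproj_out x (Hx : x \notin codom psi) :
  Tproj sb al psi x = Some (inl (exist _ x Hx)).
Proof. by rewrite /Tproj (insubT (fun x => x \notin codom psi) Hx). Qed.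

Lemma Tproj_inl x x' : Tproj sb al psi x = Some (inl x') -> x = val x'.
Proof.
rewrite /Tproj; case: insubP => [u _ <- [<-] //|_].
by case: pickP => // v _; case: (insub v).
Qed.

Lemma Tproj_out_inj x y a : x \notin codom psi ->
  Tproj sb al psi x = Some a -> Tproj sb al psi y = Some a -> y = x.
Proof. by move=> Hx; rewrite (Tproj_out Hx) => -[<-] /Tproj_inl. Qed.

Lemma Tadj_out x y a b :
  Tproj sb al psi x = Some a -> Tproj sb al psi y = Some b ->
  sg_adj al x y -> a != b -> (x \notin codom psi) || (y \notin codom psi) ->
  sg_adj T a b.
Proof.
move=> Ha Hb Hxy Hab Hout; split=> //; left; exists x, y; do 3!split=> //.
by move=> [u [v [Eu [Ev _]]]]; move: Hout; rewrite -Eu -Ev !codom_f.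
Qed.

Lemma walk_sub_G'_lift k u w : irreflexive (fg_adj (sub_G' sb)) ->
  fwalk (sub_G' sb) k u w -> walk T k (inr u) (inr w).
Proof.
move=> G'irr; elim=> {k u w} [u|k u u1 w Huu1 _ IH]; first exact: walk0.
apply: walkS IH; split; last by right; exists u, u1.
by apply/eqP => -[Eu]; rewrite Eu G'irr in Huu1.
Qed.

Definition in_sub_G' (a : sg_V T) : bool := if a is inr _ then true else false.

Lemma walk_in_sub_G' K : irreflexive (fg_adj (sub_G' sb)) -> fdiam_le (sub_G' sb) K ->
  forall a b, in_sub_G' a -> in_sub_G' b -> exists2 m, m <= K & walk T m a b.
Proof.
move=> G'irr G'diam [//|u] [//|w] _ _.
by have [m Hm Hw] := G'diam u w; exists m => //; apply: walk_sub_G'_lift.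
Qed.

Hypothesis psi_inj : injective psi.

Lemma Tproj_psi v : Tproj sb al psi (psi v) =
  omap (fun w => inr (sub_phi sb w))
       (insub v : option {v : fg_V (sub_G sb) | v \in sub_V0 sb}).
Proof.
rewrite /Tproj insubF; last by rewrite codom_f.
by case: pickP => [v' /eqP /psi_inj -> //| /(_ v)]; rewrite eqxx.
Qed.

Hypothesis V0_full : forall v, v \in sub_V0 sb.

Lemma Tproj_psi_full v :
  Tproj sb al psi (psi v) = Some (inr (sub_phi sb (exist _ v (V0_full v)))).
Proof. by rewrite Tproj_psi (insubT (fun v => v \in sub_V0 sb) (V0_full v)). Qed.

Lemma Tproj_total x : exists a, Tproj sb al psi x = Some a.
Proof.
case: (boolP (x \in codom psi)) => [/codomP [v ->] | Hx].
  by eexists; apply: Tproj_psi_full.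
by eexists; apply: Tproj_out.
Qed.

Hypothesis al_irr : forall x, ~ sg_adj al x x.

Lemma Tproj_adj x y a b : sg_adj al x y ->
  Tproj sb al psi x = Some a -> Tproj sb al psi y = Some b ->
  sg_adj T a b \/ (in_sub_G' a /\ in_sub_G' b).
Proof.
move=> Hxy Ha Hb.
case: (boolP ((x \notin codom psi) || (y \notin codom psi))) => Hout.
  left; apply: (Tadj_out Ha Hb Hxy _ Hout); apply/eqP => Eab; subst b.
  have Eyx : y = x.
    case/orP: Hout => Hout; first exact: Tproj_out_inj Hout Ha Hb.
    by symmetry; apply: Tproj_out_inj Hout Hb Ha.
  by subst y; apply: al_irr Hxy.
right; move: Hout; rewrite negb_or !negbK => /andP [/codomP [u Eu] /codomP [v Ev]].
by move: Ha Hb; rewrite Eu Ev !Tproj_psi_full => -[<-] [<-].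
Qed.

Lemma walk_Tgraph K k x y a b :
  irreflexive (fg_adj (sub_G' sb)) -> fdiam_le (sub_G' sb) K ->
  walk al k x y -> Tproj sb al psi x = Some a -> Tproj sb al psi y = Some b ->
  exists2 m, m <= k + K & walk T m a b.
Proof.
move=> G'irr G'diam.
have Tproj_functional x' a' b' :
  Tproj sb al psi x' = Some a' -> Tproj sb al psi x' = Some b' -> a' = b'.
  by move=> -> [].
exact: (walk_transfer (W := fun a => in_sub_G' a) Tproj_total Tproj_functional
  Tproj_adj (walk_in_sub_G' G'irr G'diam)).
Qed.

End Transformation.

Section TestGraphs.
Variables (S : Type) (G : fspin_graph S).

Definition sg_of_fg : spin_graph S :=
  @SpinGraph S (fg_V G) (fun x y => fg_adj G x y) (fg_spin G).

Lemma walk_sg_of_fg k x y : fwalk G k x y -> walk sg_of_fg k x y.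
Proof.
elim=> {k x y} [x|k x x1 y Hxx1 _ IH]; first exact: walk0.
exact: (@walkS S sg_of_fg k x x1 y).
Qed.

Lemma is_graph_sg_of_fg : fsimple G -> fconnected G -> is_graph sg_of_fg.
Proof.
move=> [Gsym Girr] Gc; split; [split|split].
- by move=> x y /=; rewrite Gsym.
- by move=> x /=; rewrite Girr.
- by move=> x y; have [k Hk] := Gc x y; exists k; apply: walk_sg_of_fg.
- by move=> x; exists (enum (fg_V G)) => y _; rewrite mem_enum.
Qed.

(* Two leaves per vertex: a deleted vertex isolates both, so the result is
   disconnected even when Gamma' is empty. *)
Definition pendant_vert := (fg_V G + fg_V G * bool)%type.

Definition pendant_adj (p q : pendant_vert) : bool :=
  match p, q with
  | inl u, inl v => fg_adj G u v
  | inl u, inr (v, _) | inr (u, _), inl v => u == v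
  | inr _, inr _ => false
  end.

Definition pendant_spin (p : pendant_vert) : S :=
  match p with inl u | inr (u, _) => fg_spin G u end.

Definition pendant_graph : spin_graph S :=
  @SpinGraph S pendant_vert (fun p q => pendant_adj p q) pendant_spin.

Definition pendant_base (p : pendant_vert) : fg_V G :=
  match p with inl u | inr (u, _) => u end.

Lemma walk_pendant_graph k x y :
  fwalk G k x y -> walk pendant_graph k (inl x) (inl y).
Proof.
elim=> {k x y} [x|k x x1 y Hxx1 _ IH]; [exact: walk0 | exact: walkS IH].
Qed.

Lemma walk_to_pendant_base p : exists k, walk pendant_graph k p (inl (pendant_base p)).
Proof.
case: p => [u|[u b]]; first by exists 0; apply: walk0.
by exists 1; apply: (@walkS S pendant_graph 0 _ (inl u)); [rewrite /= eqxx | apply: walk0].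
Qed.

Lemma walk_from_pendant_base p : exists k, walk pendant_graph k (inl (pendant_base p)) p.
Proof.
case: p => [u|[u b]]; first by exists 0; apply: walk0.
by exists 1; apply: (@walkS S pendant_graph 0 _ (inr (u, b))); [rewrite /= eqxx | apply: walk0].
Qed.

Lemma is_graph_pendant_graph : fsimple G -> fconnected G -> is_graph pendant_graph.
Proof.
move=> [Gsym Girr] Gc; split; [split|split].
- by case=> [u|[u b]] [v|[v c]] //=; rewrite (Gsym, eq_sym).
- by case=> [u|[u b]] //=; rewrite Girr.
- move=> x y; have [k1 H1] := walk_to_pendant_base x.
  have [k3 H3] := walk_from_pendant_base y.
  have [k2 H2] := Gc (pendant_base x) (pendant_base y).
  exists (k1 + (k2 + k3)); apply: walk_cat H1 (walk_cat _ H3).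
  exact: walk_pendant_graph.
- by move=> x; exists (enum [set: pendant_vert]) => y _; rewrite mem_enum inE.
Qed.

End TestGraphs.

Definition respects_connectivity S (sb : subst S) : Prop :=
  forall (al : spin_graph S) (psi : fg_V (sub_G sb) -> sg_V al),
    embedding sb al psi -> is_graph al -> connected (Tgraph sb al psi).

Section RespectsConnectivity.
Variables (S : Type) (sb : subst S).
Hypotheses (G_simple : fsimple (sub_G sb)) (G_connected : fconnected (sub_G sb)).
Hypothesis sb_conn : respects_connectivity sb.

Lemma sub_V0_full v : v \in sub_V0 sb.
Proof.
apply/negPn/negP => Hv.
pose psi (u : fg_V (sub_G sb)) : sg_V (pendant_graph (sub_G sb)) := inl u.
have psi_inj : injective psi by move=> ? ? [].
have psi_emb : embedding sb _ psi by [].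
have Tconn := sb_conn psi_emb (is_graph_pendant_graph G_simple G_connected).
have leaf_out b : (inr (v, b) : sg_V (pendant_graph (sub_G sb))) \notin codom psi.
  by apply/negP => /codomP [].
pose leaf b : sg_V (Tgraph sb _ psi) :=
  inl (exist (fun x => x \notin codom psi) _ (leaf_out b)).
have leaf_isolated b q : ~ sg_adj (Tgraph sb _ psi) (leaf b) q.
  case=> _ [[x [y [Hx [Hy [Hxy _]]]]] | [u [u' [//]]]].
  move/Tproj_inl: Hx => /= Ex; subst x.
  case: y Hy Hxy => [y|[y c]] //= Hy /eqP Ey; subst y.
  by rewrite (Tproj_psi psi_inj) insubF in Hy; last by apply/negbTE.
have [k Hk] := Tconn (leaf true) (leaf false).
by have [] := walk_from_isolated (@leaf_isolated true) Hk.
Qed.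

Lemma sub_G'_connected : fconnected (sub_G' sb).
Proof.
move=> u w; pose psi (x : fg_V (sub_G sb)) : sg_V (sg_of_fg (sub_G sb)) := x.
have psi_emb : embedding sb _ psi by split=> // x y.
have Tconn := sb_conn psi_emb (is_graph_sg_of_fg G_simple G_connected).
(* every edge is a link, so the result consists of Gamma' alone *)
have walk_G' k p q : walk (Tgraph sb _ psi) k p q ->
    forall u w, p = inr u -> q = inr w -> fwalk (sub_G' sb) k u w.
  elim=> {k p q} [p|k p p1 q Hpp1 _ IH] u0 w0 Ep Eq; subst p.
    by case: Eq => ->; apply: fwalk0.
  case: p1 Hpp1 IH => [[x1 Hx1]|u1] Hpp1 IH; first by have := Hx1; rewrite codom_f.
  case: Hpp1 => _ [[x [y [_ [_ [Hxy Hlink]]]]] | [u' [u'' [[<-] [[<-] Hu]]]]].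
    by case: Hlink; exists x, y.
  exact: fwalkS Hu (IH _ _ erefl Eq).
have [k Hk] := Tconn (inr u) (inr w).
by exists k; apply: walk_G' Hk _ _ erefl erefl.
Qed.

End RespectsConnectivity.

Theorem lemma2 (S : finType) (r : nat) (Sub : 'I_r -> subst S) :
  (* the substitutions are substitution rules (Gamma, Gamma' spin graphs) *)
  (forall i, subst_wf (Sub i)) ->
  (* local *)
  (forall i, fconnected (sub_G (Sub i))) ->
  (* locally bounded *)
  (exists N, forall n, N <= n ->
     forall i (al : spin_graph S) (psi : fg_V (sub_G (Sub i)) -> sg_V al),
       embedding (Sub i) al psi ->
       (GF n al -> GF n (Tgraph (Sub i) al psi)) /\ (GC n al -> GC n (Tgraph (Sub i) al psi))) ->
  (* respects connectivity *)
  (forall i (al : spin_graph S) (psi : fg_V (sub_G (Sub i)) -> sg_V al),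
     embedding (Sub i) al psi -> is_graph al -> connected (Tgraph (Sub i) al psi)) ->
  (* metrically bounded from above, for n sufficiently large *)
  exists N, forall n, N <= n ->
    exists C, 0 < C /\
      forall (al : spin_graph S), GC n al ->
      forall i (psi : fg_V (sub_G (Sub i)) -> sg_V al), embedding (Sub i) al psi ->
      forall (x y : sg_V al) (a b : sg_V (Tgraph (Sub i) al psi)),
        Tproj (Sub i) al psi x = Some a -> Tproj (Sub i) al psi y = Some b ->
        forall d d', is_dist al x y d -> is_dist (Tgraph (Sub i) al psi) a b d' ->
          d' <= d + C.
Proof.
move=> Hwf Hloc _ Hconn.
have [K HK] : exists K, forall i, exists2 Ki, Ki <= K & fdiam_le (sub_G' (Sub i)) Ki.
  apply: exists_uniform_bound => i; apply: fconnected_fdiam_le.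
  by case: (Hwf i) => Gs _; apply: sub_G'_connected (Hloc i) (@Hconn i).
exists 0 => n _; exists K.+1; split=> //.
move=> al [[[_ al_irr] _] _] i psi [psi_inj _] x y a b Ha Hb d d' [Hd _] [_ Hd'].
have [Ki HKi G'diam] := HK i.
have [Gs [_ G'irr]] := Hwf i.
have V0_full := sub_V0_full Gs (Hloc i) (@Hconn i).
have [m Hm Hw] := walk_Tgraph psi_inj V0_full al_irr G'irr G'diam Hd Ha Hb.
apply: leq_trans (Hd' _ Hw) (leq_trans Hm _).
by rewrite leq_add2l; apply: leqW.
Qed.
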